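(* Let $p\ge1$, $m\in\mathbb{N}$, $a,b>0$, $\beta\in\mathbb{R}^p$, let $\xi$ be a design on $\mathcal{X}$, and let $G$ be any real $p\times p$ matrix. Then the matrix $\frac{b}{a}G+\frac{m}{a}e_1e_1^T$ is a generalized inverse of $M(\xi;\beta)$ (i.e. $M(\xi;\beta)\bigl(\frac{b}{a}G+\frac{m}{a}e_1e_1^T\bigr)M(\xi;\beta)=M(\xi;\beta)$) if and only if $G$ is a generalized inverse of $M_{Po}(\xi;\beta)$ (i.e. $M_{Po}(\xi;\beta)GM_{Po}(\xi;\beta)=M_{Po}(\xi;\beta)$).
   Context: Let $\mathcal{X}\subseteq\mathbb{R}^k$ be a design region and $f=(1,f_1,\ldots,f_{p-1})^T:\mathcal{X}\to\mathbb{R}^p$ a vector of regression functions whose first component is the constant 1. A design $\xi$ is a probability measure on $\mathcal{X}$ with finite support $x_1,\ldots,x_l$ and weights $w_1,\ldots,w_l\ge0$, $\sum_j w_j=1$. The Poisson information matrix is $M_{Po}(\xi;\beta)=\sum_{j=1}^l w_j\exp(f(x_j)^T\beta)f(x_j)f(x_j)^T$, and the Poisson–Gamma information matrix is $M(\xi;\beta)=\frac{a}{b}\Bigl(M_{Po}(\xi;\beta)-\frac{M_{Po}(\xi;\beta)e_1e_1^TM_{Po}(\xi;\beta)}{e_1^TM_{Po}(\xi;\beta)e_1+b/m}\Bigr)$, where $e_1$ is the first standard unit vector of $\mathbb{R}^p$. *)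

From HB Require Import structures.
From mathcomp Require Import all_boot all_order all_algebra.
From mathcomp Require Import all_classical all_reals all_analysis.
Set Implicit Arguments. Unset Strict Implicit. Unset Printing Implicit Defensive.
Import Order.TTheory GRing.Theory Num.Theory.
Local Open Scope ring_scope.

(* Dimension p >= 1 is encoded as p.+1; e_1 is the first standard unit vector. *)
Definition e1 (R : nzRingType) (p : nat) : 'cV[R]_p.+1 := delta_mx 0 0.

Definition is_design (R : realType) (k l : nat) (X : set 'rV[R]_k)
  (xs : 'I_l -> 'rV[R]_k) (w : 'I_l -> R) : Prop :=
  (forall j, X (xs j)) /\ (forall j, 0 <= w j) /\ \sum_(j < l) w j = 1.

Definition MPo (R : realType) (k p l : nat) (f : 'rV[R]_k -> 'cV[R]_p.+1)
  (xs : 'I_l -> 'rV[R]_k) (w : 'I_l -> R) (beta : 'cV[R]_p.+1) : 'M[R]_p.+1 :=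
  \sum_(j < l) (w j * expR (((f (xs j))^T *m beta) 0 0)) *: (f (xs j) *m (f (xs j))^T).

Definition MPG (R : realType) (k p l : nat) (f : 'rV[R]_k -> 'cV[R]_p.+1)
  (xs : 'I_l -> 'rV[R]_k) (w : 'I_l -> R) (beta : 'cV[R]_p.+1)
  (a b : R) (m : nat) : 'M[R]_p.+1 :=
  let P := MPo f xs w beta in
  (a / b) *: (P - (((((e1 R p)^T *m P *m e1 R p) 0 0) + b / m%:R)^-1
                    *: (P *m e1 R p *m (e1 R p)^T *m P))).

(** Write [P] for [M_Po], [E = e_1 e_1^T], [c = e_1^T P e_1], [s = (c + b/m)^-1]
    and [t = m/b], so that [M = (a/b) (P - s P E P)] and the candidate inverse is
    [(a/b)^-1 (G + t E)].  Since [E P E = c E], the matrices [L = 1 - s P E] and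
    [L' = 1 - s E P] are invertible, with inverses [1 + t P E] and [1 + t E P],
    because [t = s (1 + t c)]; moreover [P - s P E P = L P = P L' = L (P + t P E P) L'].
    Hence [M (G + t E) M = L (P G P + t P E P) L'], which equals
    [L (P + t P E P) L'] exactly when [P G P = P]. *)
From HB Require Import structures.
From mathcomp Require Import all_boot all_order all_algebra.
From mathcomp Require Import all_classical all_reals all_analysis.
From mathcomp Require Import ring.
Import Order.TTheory GRing.Theory Num.Theory.
Local Open Scope ring_scope.

Section RankOneUpdate.
Variables (R : comPzRingType) (n : nat).

Lemma mulmx_update_expand (A : 'M[R]_n) (c s t : R) : A *m A = c *: A ->
  (1%:M - s *: A) *m (1%:M + t *: A) = 1%:M + (t - s - s * t * c) *: A /\
  (1%:M + t *: A) *m (1%:M - s *: A) = 1%:M + (t - s - s * t * c) *: A.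
Proof.
move=> AA; rewrite mulmxBl mulmxDl !mul1mx mulmxDr mulmxBr !mulmx1.
rewrite -!scalemxAl -!scalemxAr !scalerA AA !scalerA.
by split; rewrite -!addrA ?opprD -?scaleNr -?scalerDl; congr (_ + _ *: _); ring.
Qed.

Variables (P E : 'M[R]_n) (c s t : R).
Hypotheses (EPE : E *m P *m E = c *: E) (hst : t = s * (1 + t * c)).

Let update_coef0 : t - s - s * t * c = 0.
Proof. by rewrite {1}hst; ring. Qed.

Let W := P *m E *m P.
Let L := 1%:M - s *: (P *m E).
Let L' := 1%:M - s *: (E *m P).

Lemma mulmx_update_invertible :
  (1%:M + t *: (P *m E)) *m L = 1%:M /\ L' *m (1%:M + t *: (E *m P)) = 1%:M.
Proof.
have PEPE : P *m E *m (P *m E) = c *: (P *m E).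
  by rewrite scalemxAr -EPE !mulmxA.
have EPEP : E *m P *m (E *m P) = c *: (E *m P).
  by rewrite scalemxAl -EPE !mulmxA.
have [_ ->] := mulmx_update_expand _ _ s t PEPE.
have [-> _] := mulmx_update_expand _ _ s t EPEP.
by rewrite update_coef0 !scale0r !addr0.
Qed.

Lemma update_mulmx_l : L *m P = P - s *: W.
Proof. by rewrite /L mulmxBl mul1mx -scalemxAl. Qed.

Lemma update_mulmx_r : P *m L' = P - s *: W.
Proof. by rewrite /L' mulmxBr mulmx1 -scalemxAr /W mulmxA. Qed.

Lemma update_cancel : L *m (P + t *: W) = P.
Proof.
have PEW : P *m E *m W = c *: W.
  by rewrite /W scalemxAl scalemxAr -EPE !mulmxA.
rewrite /L mulmxBl mul1mx mulmxDr -!scalemxAl -scalemxAr PEW !scalerA.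
rewrite -scalerDl -addrA -scalerBl opprD addrA.
by rewrite update_coef0 scale0r addr0.
Qed.

Lemma update_ginvP (G : 'M[R]_n) :
  (P - s *: W) *m (G + t *: E) *m (P - s *: W) = P - s *: W <-> P *m G *m P = P.
Proof.
have factor : P - s *: W = L *m (P + t *: W) *m L'.
  by rewrite update_cancel update_mulmx_r.
have sandwich : (P - s *: W) *m (G + t *: E) *m (P - s *: W)
    = L *m (P *m G *m P + t *: W) *m L'.
  rewrite -{1}update_mulmx_l -update_mulmx_r.
  have -> : L *m P *m (G + t *: E) *m (P *m L')
      = L *m (P *m (G + t *: E) *m P) *m L' by rewrite !mulmxA.
  by congr (L *m _ *m L'); rewrite mulmxDr mulmxDl -scalemxAr -scalemxAl.
rewrite sandwich; split => [|->]; last by rewrite -factor.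
have [invL invR] := mulmx_update_invertible.
move=> /(congr1 (fun Y => (1%:M + t *: (P *m E)) *m Y *m (1%:M + t *: (E *m P)))).
rewrite factor !mulmxA invL -!mulmxA invR !mulmx1.
by rewrite !mul1mx mulmxA => /addIr.
Qed.

End RankOneUpdate.

Lemma ginv_scaleP (R : fieldType) (n : nat) (Q H : 'M[R]_n) (x : R) : x != 0 ->
  (x *: Q) *m (x^-1 *: H) *m (x *: Q) = x *: Q <-> Q *m H *m Q = Q.
Proof.
move=> x0; rewrite -!scalemxAl -!scalemxAr -scalemxAl !scalerA.
rewrite divff // mulr1.
by split=> [/(scalerI x0)|->].
Qed.

Lemma rank_one_sandwich (R : comPzRingType) (n : nat) (u : 'cV[R]_n) (A : 'M[R]_n) :
  u *m u^T *m A *m (u *m u^T) = (u^T *m A *m u) 0 0 *: (u *m u^T).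
Proof.
have -> : u *m u^T *m A *m (u *m u^T) = u *m (u^T *m A *m u) *m u^T.
  by rewrite !mulmxA.
by rewrite {1}[u^T *m A *m u]mx11_scalar mul_mx_scalar -scalemxAl.
Qed.

Lemma MPo_e1_ge0 (R : realType) (k p l : nat) (f : 'rV[R]_k -> 'cV[R]_p.+1)
    (xs : 'I_l -> 'rV[R]_k) (w : 'I_l -> R) (beta : 'cV[R]_p.+1) :
  (forall j, 0 <= w j) -> 0 <= ((e1 R p)^T *m MPo f xs w beta *m e1 R p) 0 0.
Proof.
move=> w_ge0; rewrite /e1 trmx_delta -rowE -colE !mxE /MPo summxE.
apply: sumr_ge0 => j _; rewrite !mxE big_ord1 !mxE.
apply: mulr_ge0; first by rewrite mulr_ge0 ?w_ge0 ?expR_ge0.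
by rewrite -expr2 sqr_ge0.
Qed.

Theorem lemma2 (R : realType) (k p : nat) (X : set 'rV[R]_k)
  (f : 'rV[R]_k -> 'cV[R]_p.+1)
  (hf1 : forall x, X x -> f x 0 0 = 1)
  (m : nat) (hm : (0 < m)%N) (a b : R) (ha : 0 < a) (hb : 0 < b)
  (beta : 'cV[R]_p.+1) (l : nat) (xs : 'I_l -> 'rV[R]_k) (w : 'I_l -> R)
  (hxi : is_design X xs w) (G : 'M[R]_p.+1) :
  let M := MPG f xs w beta a b m in
  let MP := MPo f xs w beta in
  M *m ((b / a) *: G + (m%:R / a) *: (e1 R p *m (e1 R p)^T)) *m M = M
  <-> MP *m G *m MP = MP.
Proof.
move=> M MP; rewrite /M /MPG -/MP.
set e := e1 R p; set c := (e^T *m MP *m e) 0 0.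
(* [c >= 0] holds for any regressor [f]. *)
have c_ge0 : 0 <= c by apply: MPo_e1_ge0; case: hxi => _ [].
have m_gt0 : (0 : R) < m%:R by rewrite ltr0n.
have cmb_gt0 : 0 < c * m%:R + b by rewrite ltr_wpDl // mulr_ge0 // ltW.
have -> : (b / a) *: G + (m%:R / a) *: (e *m e^T)
    = (a / b)^-1 *: (G + (m%:R / b) *: (e *m e^T)).
  rewrite invf_div scalerDr scalerA; congr (_ + _ *: _).
  by field; rewrite !gt_eqF.
have -> : MP *m e *m e^T *m MP = MP *m (e *m e^T) *m MP by rewrite !mulmxA.
rewrite ginv_scaleP ?gt_eqF ?divr_gt0 //.
apply: (@update_ginvP _ _ MP (e *m e^T) c _ (m%:R / b)).
  exact: rank_one_sandwich.
by field; rewrite !gt_eqF.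
Qed.
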